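(* Let $\widehat{\mathcal T}_{pl}$ be the completion (formal infinite sums, graded by number of edges) of the linear span $\mathcal T_{pl}$ over a field $k$ of characteristic zero of planar rooted trees, equipped with the associative product $\star$ described in the context, and let $\ell^{(n)}$ denote the ladder tree with $n$ edges. Put $X:=\bullet+\sum_{n\ge 1}\ell^{(n)}$, where $\bullet$ is the one-vertex tree (the unit for $\star$). Then $$\log^\star(X)=\sum_{n>0}\frac{1}{n}\sum_{\tau\in T_{pl},\ |\tau|=n}\frac{(-1)^{\mathcal L(\tau)-1}}{\binom{n-1}{\mathcal L(\tau)-1}}\,\tau ,$$ where $|\tau|$ is the number of edges of $\tau$ and $\mathcal L(\tau)$ is its number of leaves.
   Context: A planar rooted tree is a finite rooted tree embedded in the plane (the order of the children of each vertex matters); $T_{pl}$ is the set of such trees and $\mathcal T_{pl}$ its linear span. The one-vertex tree is denoted $\bullet$. For planar rooted trees $t_1,\dots,t_n$, $B_+(t_1\cdots t_n)$ is the tree obtained by attaching the roots of $t_1,\dots,t_n$ (in this left-to-right order) to a new common root. The left Butcher product of $t$ and $u=B_+(u_1\cdots u_p)$ (with $p\ge 0$, $u=\bullet$ when $p=0$) is $t\circ u:=B_+(t\,u_1\cdots u_p)$; every tree $t\neq\bullet$ decomposes uniquely as $t=t_1\circ t_2$. Extend $\circ$ bilinearly. The product $\star$ on $\mathcal T_{pl}$ is the bilinear product defined recursively by $\bullet\star t=t\star\bullet=t$ and, for $s=s_1\circ s_2$ and $t=t_1\circ t_2$, $s\star t=s_1\circ(s_2\star t)+(s\star t_1)\circ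 t_2$; it is associative, has unit $\bullet$, and is additive in the number of edges, so it extends to $\widehat{\mathcal T}_{pl}$. Ladder trees: $\ell^{(0)}=\bullet$, $\ell^{(n+1)}=\ell^{(n)}\circ\bullet$ (the tree with $n$ edges forming a single path from the root). For $L\in\widehat{\mathcal T}_{pl}$ with no component in degree $0$, $\log^\star(\bullet+L):=\sum_{k\ge1}\frac{(-1)^{k+1}}{k}L^{\star k}$. A leaf of a tree with at least one edge is a vertex with no children. *)

From HB Require Import structures.
From mathcomp Require Import all_boot all_order all_algebra.
Set Implicit Arguments. Unset Strict Implicit. Unset Printing Implicit Defensive.
Import GRing.Theory.
Local Open Scope ring_scope.

Inductive ptree := Node of seq ptree.

Definition bullet : ptree := Node [::].
Definition Bplus (ts : seq ptree) : ptree := Node ts.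

Fixpoint ptree_ind' (P : ptree -> Prop)
  (IH : forall ts, foldr (fun t A => P t /\ A) True ts -> P (Node ts)) (t : ptree) : P t :=
  match t with
  | Node ts => IH ts ((fix aux (ts : seq ptree) : foldr (fun t A => P t /\ A) True ts :=
                        match ts with
                        | [::] => I
                        | t :: ts' => conj (ptree_ind' IH t) (aux ts')
                        end) ts)
  end.

Fixpoint ptree_enc (t : ptree) : GenTree.tree unit :=
  match t with Node ts => GenTree.Node 0 (map ptree_enc ts) end.
Fixpoint ptree_dec (g : GenTree.tree unit) : ptree :=
  match g with
  | GenTree.Leaf _ => Node [::]
  | GenTree.Node _ gs => Node (map ptree_dec gs)
  end.
Lemma ptree_encK : cancel ptree_enc ptree_dec.
Proof.
elim/ptree_ind' => ts IH /=; congr Node; rewrite -map_comp.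
by elim: ts IH => [|t ts IHts] //= [-> /IHts ->].
Qed.
HB.instance Definition _ := Countable.copy ptree (can_type ptree_encK).

Fixpoint edges (t : ptree) : nat :=
  match t with Node ts => sumn (map (fun s => (edges s).+1) ts) end.

(* number of leaves (vertices without children); for the one-vertex tree it is 1
   by convention, which is never used in the statement *)
Fixpoint leaves (t : ptree) : nat :=
  match t with
  | Node [::] => 1
  | Node ts => sumn (map leaves ts)
  end.

Definition circ (t u : ptree) : ptree :=
  match u with Node us => Node (t :: us) end.

Fixpoint ladder (n : nat) : ptree :=
  if n is m.+1 then circ (ladder m) bullet else bullet.

(* The product star on basis trees, as an element of the span of trees with
   nonnegative integer coefficients, represented as a multiset (seq) of trees.
   For s = s1 o s2 = Node (s1 :: ss) (so s2 = Node ss), t = t1 o t2: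
   s * t = s1 o (s2 * t) + (s * t1) o t2.
   Defined with fuel; fuel (edges s + edges t).+1 suffices. *)
Fixpoint star_fuel (fuel : nat) (s t : ptree) : seq ptree :=
  match fuel with
  | 0 => [::]
  | f.+1 =>
    match s, t with
    | Node [::], _ => [:: t]
    | _, Node [::] => [:: s]
    | Node (s1 :: ss), Node (t1 :: ts) =>
        map (circ s1) (star_fuel f (Node ss) t)
        ++ map (fun x => circ x (Node ts)) (star_fuel f s t1)
    end
  end.

Definition star (s t : ptree) : seq ptree := star_fuel (edges s + edges t).+1 s t.

(* enumeration of forests of total weight n (weight of a tree = edges + 1)
   and of trees with exactly n edges *)
Fixpoint forests_fuel (fuel n : nat) : seq (seq ptree) :=
  match fuel with
  | 0 => [::]
  | f.+1 =>
    if n is 0 then [:: [::]]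
    else flatten [seq [seq Node c :: rest | c <- forests_fuel f e,
                                             rest <- forests_fuel f (n - e.+1)]
                 | e <- iota 0 n]
  end.

Definition trees_of_size (n : nat) : seq ptree := map Node (forests_fuel n.+1 n).

(* Completion \hat T_pl over R: arbitrary coefficient families. *)
Definition series (R : fieldType) := ptree -> R.

Definition delta (R : fieldType) (t : ptree) : series R := fun u => (u == t)%:R.

Definition sstar (R : fieldType) (f g : series R) : series R := fun u =>
  \sum_(i < (edges u).+1) \sum_(s <- trees_of_size i)
     \sum_(t <- trees_of_size (edges u - i))
        f s * g t * (count_mem u (star s t))%:R.

Fixpoint spow (R : fieldType) (f : series R) (k : nat) : series R :=
  if k is m.+1 then sstar f (spow f m) else delta R bullet.

(* X = bullet + sum_{n>=1} ladder n : coefficient 1 exactly on ladders *)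
Definition Xlad (R : fieldType) : series R := fun u => (u == ladder (edges u))%:R.

Definition series_lim (R : fieldType) (S : nat -> series R) (l : series R) : Prop :=
  forall u, exists N, forall M, (N <= M)%N -> S M u = l u.

Definition log_partial (R : fieldType) (L : series R) (M : nat) : series R := fun u =>
  \sum_(1 <= k < M.+1) ((-1) ^+ k.+1 / k%:R) * spow L k u.

Definition log_star (R : fieldType) (Y : series R) (l : series R) : Prop :=
  Y bullet = 1 /\ series_lim (log_partial (fun u => Y u - delta R bullet u)) l.

Definition rhs (R : fieldType) : series R := fun u =>
  let n := edges u in
  if n is 0 then 0
  else (n%:R)^-1 * ((-1) ^+ (leaves u).-1 / ('C(n.-1, (leaves u).-1))%:R).

From mathcomp Require Import all_boot all_order all_algebra.
From mathcomp Require Import zify ring.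
Import GRing.Theory.
Local Open Scope ring_scope.
Set Implicit Arguments. Unset Strict Implicit. Unset Printing Implicit Defensive.

(* Write X = • + L, where L is the sum of the ladders with at least one edge.
   Left ⋆-multiplication by a ladder grafts it as a new leftmost child on a vertex of the
   leftmost branch, so the ways of writing a tree u as a term of ℓ ⋆ t are listed by peeling
   ladders off that branch.  This yields a Pascal-type recursion in k showing that a tree with
   n edges and l leaves has coefficient C(n - l, k - l) in L^{⋆k}.  Its coefficient in
   log^⋆(X) is thus Σ_k (-1)^(k+1)/k · C(n - l, k - l), which by the recursion
   B(a, b) = B(a + 1, b) + B(a, b + 1) of the Beta function equals
   (-1)^(l-1) B(l, n - l + 1) = (-1)^(l-1) / (n · C(n - 1, l - 1)). *)


Lemma Node_eq ts us : (Node ts == Node us) = (ts == us).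
Proof. by apply/eqP/eqP => [[]|->]. Qed.

Lemma edges_gt0 t : t != bullet -> (0 < edges t)%N.
Proof. by case: t => [[|s ss]]. Qed.

Lemma leaves_gt0 t : (0 < leaves t)%N.
Proof.
by elim/ptree_ind': t => [[|s ss]] //= [s_gt0 _]; rewrite ltn_addr.
Qed.

(* The one-vertex tree has no leaf here, unlike for [leaves]. *)
Definition leaves0 (t : ptree) : nat := let: Node ts := t in sumn (map leaves ts).

Lemma leaves0E t : t != bullet -> leaves0 t = leaves t.
Proof. by case: t => [[|s ss]]. Qed.

Lemma leaves0_eq0 t : (leaves0 t == 0)%N = (t == bullet).
Proof.
case: t => [[|s ss]] //=; rewrite Node_eq addn_eq0.
by have := leaves_gt0 s; rewrite lt0n => /negbTE ->.
Qed.

Lemma leaves0_le_edges t : (leaves0 t <= edges t)%N.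
Proof.
elim/ptree_ind': t => ts /=; elim: ts => //= s ss IHss [le_s /IHss le_ss].
rewrite leq_add // (@leq_trans (leaves0 s).+1) //.
by case: s {le_s} => [[|s' ss']].
Qed.

Definition is_ladder (t : ptree) : bool := t == ladder (edges t).

Lemma edges_ladder n : edges (ladder n) = n.
Proof. by elim: n => //= n ->; rewrite addn0. Qed.

Lemma eq_ladder t n : (t == ladder n) = is_ladder t && (edges t == n).
Proof.
have [->|ne] := eqVneq t (ladder n); first by rewrite /is_ladder edges_ladder !eqxx.
by apply/esym/andP => [[/eqP lad /eqP en]]; move: ne; rewrite lad en eqxx.
Qed.

Lemma is_ladder_bullet : is_ladder bullet.
Proof. by []. Qed.

Lemma is_ladder_cons z zs : is_ladder (Node (z :: zs)) = (zs == [::]) && is_ladder z.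
Proof.
rewrite /is_ladder /= addnC; case: zs => [|z' zs] /=.
  by rewrite Node_eq eqseq_cons andbT.
by rewrite Node_eq eqseq_cons /= andbF.
Qed.

Lemma star_fuel_enough f g s t : (edges s + edges t < f)%N -> (edges s + edges t < g)%N ->
  star_fuel f s t = star_fuel g s t.
Proof.
elim: f g s t => [|f IH] [|g] // [[|s1 ss]] [[|t1 ts]] //= ltf ltg.
by rewrite (IH g (Node ss)) ?(IH g _ t1) //=; lia.
Qed.

Lemma star_bullet_l t : star bullet t = [:: t].
Proof. by case: t. Qed.

Lemma star_bullet_r s : star s bullet = [:: s].
Proof. by case: s => [[|s1 ss]]. Qed.

Lemma star_cons s1 ss t1 ts :
  star (Node (s1 :: ss)) (Node (t1 :: ts)) =
  map (circ s1) (star (Node ss) (Node (t1 :: ts)))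
  ++ map (circ^~ (Node ts)) (star (Node (s1 :: ss)) t1).
Proof.
have star_fuelS f : star_fuel f.+1 (Node (s1 :: ss)) (Node (t1 :: ts)) =
    map (circ s1) (star_fuel f (Node ss) (Node (t1 :: ts)))
    ++ map (circ^~ (Node ts)) (star_fuel f (Node (s1 :: ss)) t1) by [].
by rewrite /star star_fuelS; congr (_ ++ _); congr map; apply: star_fuel_enough => /=; lia.
Qed.

Lemma star_ladder_cons i t1 ts :
  star (ladder i.+1) (Node (t1 :: ts)) =
  Node (ladder i :: t1 :: ts) :: [seq Node (x :: ts) | x <- star (ladder i.+1) t1].
Proof. by rewrite [ladder _]/= star_cons star_bullet_l. Qed.

Lemma count_allpairs (S T U : eqType) (f : S -> T -> U) (A : seq S) (B : seq T) x y :
  (forall x1 y1 x2 y2, f x1 y1 = f x2 y2 -> x1 = x2 /\ y1 = y2) ->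
  count_mem (f x y) [seq f a b | a <- A, b <- B] = (count_mem x A * count_mem y B)%N.
Proof.
move=> f_inj; elim: A => //= a A IH; rewrite count_cat IH count_map mulnDl.
congr (_ + _)%N; have [->|neq_ax] := eqVneq a x.
  by rewrite mul1n; apply: eq_count => b /=; apply/eqP/eqP => [/f_inj[]|->].
rewrite mul0n; apply/eqP; rewrite -leqn0 leqNgt -has_count.
by apply/hasPn => b _ /=; apply/eqP => /f_inj [eq_ax _]; rewrite eq_ax eqxx in neq_ax.
Qed.

Lemma count_forests f n F : (n < f)%N ->
  count_mem F (forests_fuel f n) = (edges (Node F) == n).
Proof.
elim: f n F => // f IH [|n] F lt_nf; first by case: F => [|s ss]; rewrite //= addn0.
have -> : forests_fuel f.+1 n.+1 =
    flatten [seq [seq Node c :: rest | c <- forests_fuel f e,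
                                       rest <- forests_fuel f (n.+1 - e.+1)]
            | e <- iota 0 n.+1] by [].
case: F => [|[c] r].
  by apply/count_memPn/flattenP => [[s /mapP [e _ ->] /allpairsP [[c r] [_ _]]]].
rewrite count_flatten -map_comp sumnE big_map.
under eq_bigr => e _ do rewrite /= count_allpairs => [|? ? ? ? []] //.
rewrite (eq_big_seq (fun e => if e == edges (Node c)
                              then (edges (Node r) == (n - e)%N : nat) else 0%N)); last first.
  move=> e; rewrite mem_iota => /andP [_ lt_e].
  rewrite !IH; try lia.
  by rewrite eq_sym; case: eqP; rewrite ?mul1n ?subSS.
rewrite -big_mkcond -[iota 0 n.+1]/(index_iota 0 n.+1) big_nat1_eq /=.
case: ltnP => /= [lt_cn|le_nc]; apply/eqP; case: eqP; lia.
Qed.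

Lemma count_trees_of_size n t : count_mem t (trees_of_size n) = (edges t == n).
Proof.
case: t => F; rewrite /trees_of_size count_map -(@count_forests n.+1) //.
by apply: eq_count => G /=; rewrite Node_eq.
Qed.

Lemma mem_trees_of_size n t : (t \in trees_of_size n) = (edges t == n).
Proof. by rewrite -has_pred1 has_count count_trees_of_size; case: eqP. Qed.

(* [ladder i.+1 ⋆ t] grafts [ladder i] as a new leftmost child on some vertex of the
   leftmost branch of [t]; [ladder_cofactors u] undoes this in every possible way. *)
Fixpoint ladder_cofactors (u : ptree) : seq (nat * ptree) :=
  match u with
  | Node [::] => [::]
  | Node (z :: zs) =>
      (if is_ladder z then [:: ((edges z).+1, Node zs)] else [::])
      ++ [seq (p.1, Node (p.2 :: zs)) | p <- ladder_cofactors z]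
  end.

Lemma ladder_cofactors_edges u p : p \in ladder_cofactors u ->
  (0 < p.1)%N /\ (p.1 + edges p.2 = edges u)%N.
Proof.
elim/ptree_ind': u p => [[|z zs]] //= [IHz _] p.
rewrite mem_cat => /orP [|/mapP [q /IHz [q1_gt0 q_edges] ->]] /=.
  by case: ifP => // _; rewrite inE => /eqP -> /=; split; lia.
by split=> //; lia.
Qed.

Lemma count_graft (s : seq ptree) ts u :
  count_mem u [seq Node (x :: ts) | x <- s] =
  if u is Node (z :: zs) then ((zs == ts) * count_mem z s)%N else 0%N.
Proof.
rewrite count_map; case: u => [[|z zs]].
  by apply/eqP; rewrite -leqn0 leqNgt -has_count; apply/hasPn => x _ /=; rewrite Node_eq.
have [->|neq] := eqVneq zs ts.
  by rewrite mul1n; apply: eq_count => x /=; rewrite Node_eq eqseq_cons eqxx andbT.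
rewrite mul0n; apply/eqP; rewrite -leqn0 leqNgt -has_count; apply/hasPn => x _ /=.
by rewrite Node_eq eqseq_cons [ts == _]eq_sym (negbTE neq) andbF.
Qed.

Lemma count_graft_cofactors (s : seq (nat * ptree)) zs i t :
  count_mem (i, t) [seq (p.1, Node (p.2 :: zs)) | p <- s] =
  if t is Node (t1 :: ts) then ((ts == zs) * count_mem (i, t1) s)%N else 0%N.
Proof.
rewrite count_map; case: t => [[|t1 ts]].
  apply/eqP; rewrite -leqn0 leqNgt -has_count.
  by apply/hasPn => p _ /=; rewrite xpair_eqE Node_eq andbF.
have [->|neq] := eqVneq ts zs.
  by rewrite mul1n; apply: eq_count => p /=; rewrite !xpair_eqE Node_eq eqseq_cons eqxx andbT.
rewrite mul0n; apply/eqP; rewrite -leqn0 leqNgt -has_count; apply/hasPn => p _ /=.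
by rewrite xpair_eqE Node_eq eqseq_cons [zs == _]eq_sym (negbTE neq) !andbF.
Qed.

Lemma count_star_ladder u i t : (0 < i)%N ->
  count_mem u (star (ladder i) t) = count_mem (i, t) (ladder_cofactors u).
Proof.
case: i => // i _; elim/ptree_ind': u t => [[|z zs]] IH t.
  case: t => [[|t1 ts]]; first by rewrite star_bullet_r /= Node_eq.
  by rewrite star_ladder_cons /= count_graft Node_eq.
case: IH => IHz _.
have head ts : (Node (ladder i :: ts) == Node (z :: zs) : nat) =
    count_mem (i.+1, Node ts) (if is_ladder z then [:: ((edges z).+1, Node zs)] else [::]).
  rewrite Node_eq eqseq_cons eq_sym eq_ladder.
  by case: ifP => //= _; rewrite addn0 xpair_eqE eqSS Node_eq [zs == _]eq_sym.
rewrite /= count_cat count_graft_cofactors; case: t => [[|t1 ts]].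
  by rewrite star_bullet_r /= !addn0 head.
by rewrite star_ladder_cons /= count_graft IHz head [ts == _]eq_sym.
Qed.

(* The coefficient in [(X - •)^{⋆k}] of a tree with [n] edges and [l] leaves; the
   guard matters because of truncated subtraction. *)
Definition ladder_power_coef (k n l : nat) : nat := if (l <= k)%N then 'C(n - l, k - l) else 0.

Lemma ladder_power_coefSS k n l :
  ladder_power_coef k.+1 n.+1 l.+1 = ladder_power_coef k n l.
Proof. by rewrite /ladder_power_coef ltnS !subSS. Qed.

Lemma ladder_power_coef_pascal k n l : (l <= n)%N ->
  ladder_power_coef k n.+1 l = (ladder_power_coef k n.+1 l.+1 + ladder_power_coef k n l)%N.
Proof.
move=> le_ln; rewrite /ladder_power_coef; case: (ltngtP l k) => [lt_lk|//|<-].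
  by rewrite subSn // subSS -(subnSK lt_lk) binS addnC.
by rewrite !subnn !bin0.
Qed.

Lemma ladder_power_coef_diag k l : ladder_power_coef k l l = (k == l).
Proof.
rewrite /ladder_power_coef subnn bin0n; case: ltngtP => [lt_lk|lt_kl|->].
- by rewrite subn_eq0 leqNgt lt_lk.
- by [].
- by rewrite subnn.
Qed.

Lemma ladder_power_coef0 n l : ladder_power_coef 0 n l = (l == 0)%N.
Proof. by rewrite /ladder_power_coef leqn0; case: eqP => [->|]; rewrite ?sub0n ?bin0. Qed.

Lemma sum_if_seq1 (T : Type) (b : bool) (x : T) (F : T -> nat) :
  (\sum_(y <- if b then [:: x] else [::]) F y = b * F x)%N.
Proof. by case: b; rewrite ?big_seq1 ?big_nil ?mul1n. Qed.

Lemma ladder_power_coef_tail k a b zs : (b <= a)%N ->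
  (ladder_power_coef k (edges (Node zs) + a.+1) (leaves (Node zs) + b)
   + (zs == [::]) * ladder_power_coef k a b
  = ladder_power_coef k (edges (Node zs) + a.+1) (leaves0 (Node zs) + b))%N.
Proof.
case: zs => [|z zs] le_ba; last by rewrite addn0.
by rewrite /= !add0n add1n mul1n -ladder_power_coef_pascal.
Qed.

(* [x] sits as leftmost subtree in a context contributing [a.+1] edges and [b] leaves. *)
Lemma sum_ladder_cofactors_ctx k x a b : (b <= a)%N ->
  (\sum_(p <- ladder_cofactors x) ladder_power_coef k (edges p.2 + a.+1) (leaves p.2 + b)
   + is_ladder x * ladder_power_coef k a b
  = ladder_power_coef k.+1 (edges x + a.+1) (leaves x + b))%N.
Proof.
elim/ptree_ind': x a b => [[|z zs]] IH a b le_ba.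
  by rewrite big_nil is_ladder_bullet /= mul1n add0n ladder_power_coefSS.
case: IH => [IHz _].
have le_ab' : (leaves0 (Node zs) + b <= edges (Node zs) + a.+1)%N.
  by have := leaves0_le_edges (Node zs); lia.
have -> : ladder_power_coef k.+1 (edges (Node (z :: zs)) + a.+1) (leaves (Node (z :: zs)) + b)
    = ladder_power_coef k.+1 (edges z + (edges (Node zs) + a.+1).+1)
                             (leaves z + (leaves0 (Node zs) + b)).
  by rewrite /=; congr ladder_power_coef; lia.
rewrite -(IHz _ _ le_ab') -(ladder_power_coef_tail k zs le_ba).
rewrite [ladder_cofactors _]/= big_cat big_map sum_if_seq1 is_ladder_cons -mulnb.
rewrite (eq_bigr (fun q => ladder_power_coef k (edges q.2 + (edges (Node zs) + a.+1).+1)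
                                              (leaves q.2 + (leaves0 (Node zs) + b)))).
  by rewrite /=; nia.
by move=> q _ /=; congr ladder_power_coef; lia.
Qed.

Definition ladder_power_count (k : nat) (u : ptree) : nat :=
  ladder_power_coef k (edges u) (leaves0 u).

Lemma sum_ladder_cofactors k u :
  (\sum_(p <- ladder_cofactors u) ladder_power_count k p.2 = ladder_power_count k.+1 u)%N.
Proof.
case: u => [[|y ys]]; first by rewrite big_nil.
have -> : ladder_power_count k.+1 (Node (y :: ys)) =
    ladder_power_coef k.+1 (edges y + (edges (Node ys)).+1) (leaves y + leaves0 (Node ys)).
  by rewrite /ladder_power_count /=; congr ladder_power_coef; lia.
rewrite -(sum_ladder_cofactors_ctx k y (leaves0_le_edges (Node ys))).
rewrite [ladder_cofactors _]/= big_cat big_map sum_if_seq1 addnC; congr (_ + _)%N.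
by apply: eq_bigr => q _; rewrite /ladder_power_count /=; congr ladder_power_coef; lia.
Qed.

Section LadderSeries.
Variable R : fieldType.

Definition ladders : series R := fun u => Xlad R u - delta R bullet u.

Lemma laddersE u : ladders u = (is_ladder u && (0 < edges u)%N)%:R.
Proof.
rewrite /ladders /Xlad /delta -/(is_ladder u).
have [->|u_nb] := eqVneq u bullet; first by rewrite is_ladder_bullet subrr.
by rewrite edges_gt0 // andbT subr0.
Qed.

Lemma sum_count_mem (T : eqType) (r : seq T) (c : T) (G : T -> R) :
  \sum_(s <- r) (s == c)%:R * G s = (count_mem c r)%:R * G c.
Proof.
elim: r => [|x r IH]; first by rewrite big_nil mul0r.
rewrite big_cons IH /= natrD mulrDl; congr (_ + _).
by have [->|] := eqVneq x c; rewrite ?mul0r.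
Qed.

Lemma sum_trees_of_size_ladders (G : ptree -> R) i :
  \sum_(s <- trees_of_size i) ladders s * G s = (0 < i)%N%:R * G (ladder i).
Proof.
rewrite (eq_big_seq (fun s => (0 < i)%N%:R * ((s == ladder i)%:R * G s))) => [|s].
  by rewrite -big_distrr sum_count_mem count_trees_of_size edges_ladder eqxx mul1r.
rewrite mem_trees_of_size => /eqP s_edges.
by rewrite laddersE eq_ladder s_edges eqxx andbT andbC -mulnb natrM mulrA.
Qed.

Lemma sum_by_edges (r : seq (nat * ptree)) n (G : nat -> ptree -> R) :
  (forall p, p \in r -> p.1 + edges p.2 = n)%N ->
  \sum_(p <- r) G p.1 p.2 =
  \sum_(i < n.+1) \sum_(t <- trees_of_size (n - i)) (count_mem ((i : nat), t) r)%:R * G i t.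
Proof.
elim: r => [|[i0 t0] r IH] r_edges.
  by rewrite big_nil big1 // => i _; rewrite big1 // => t _; rewrite mul0r.
have e0 : (i0 + edges t0 = n)%N by apply: (r_edges (i0, t0)); rewrite mem_head.
rewrite big_cons IH => [|q q_r]; last by apply: r_edges; rewrite inE q_r orbT.
under [RHS]eq_bigr => i _ do under eq_bigr => t _ do
  rewrite /= natrD mulrDl xpair_eqE [i0 == _]eq_sym [t0 == _]eq_sym -mulnb natrM -mulrA.
under [RHS]eq_bigr => i _ do rewrite big_split /= -big_distrr sum_count_mem.
rewrite big_split /=; congr (_ + _).
rewrite -(big_mkord xpredT (fun i =>
  (i == i0)%:R * ((count_mem t0 (trees_of_size (n - i)))%:R * G i t0))).
rewrite sum_count_mem count_trees_of_size count_uniq_mem ?iota_uniq // mem_iota.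
by rewrite subn0 add0n ltnS -e0 leq_addr addKn eqxx !mul1r.
Qed.

Lemma sstar_ladders (g : series R) u :
  sstar ladders g u = \sum_(p <- ladder_cofactors u) g p.2.
Proof.
rewrite (@sum_by_edges _ (edges u) (fun _ t => g t)) => [|p /ladder_cofactors_edges []//].
apply: eq_bigr => i _.
under eq_bigr => s _ do under eq_bigr => t _ do rewrite -mulrA.
under eq_bigr => s _ do rewrite -big_distrr.
rewrite sum_trees_of_size_ladders big_distrr; apply: eq_bigr => t _ /=.
have [i0|i_gt0] := posnP i.
  suff /count_memPn -> : ((i : nat), t) \notin ladder_cofactors u by rewrite i0 !mul0r.
  by apply/negP => /ladder_cofactors_edges []; rewrite i0.
by rewrite mul1r count_star_ladder // mulrC.
Qed.

Lemma spow_ladders k u : spow ladders k u = (ladder_power_count k u)%:R.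
Proof.
elim: k u => [|k IH] u.
  by rewrite /= /delta /ladder_power_count ladder_power_coef0 leaves0_eq0.
by rewrite /= sstar_ladders (eq_bigr _ (fun p _ => IH p.2)) -natr_sum sum_ladder_cofactors.
Qed.

End LadderSeries.

Section AlternatingSum.
Variables (R : fieldType) (charR : [pchar R] =i pred0).

Lemma natf_eq0 n : (n%:R == 0 :> R) = (n == 0)%N.
Proof. exact: (pcharf0P R).1 charR n. Qed.

Lemma factf_neq0 n : (n`!%:R != 0 :> R).
Proof. by rewrite natf_eq0 -lt0n fact_gt0. Qed.

(* The Beta integral B(m+1, n+1). *)
Definition beta (m n : nat) : R := (m`! * n`!)%:R / ((m + n).+1)`!%:R.

Lemma betaE m n : beta m n = beta m.+1 n + beta m n.+1.
Proof.
have : m.+1%:R + n.+1%:R != 0 :> R by rewrite -natrD natf_eq0.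
have : (m + n).+1%:R != 0 :> R by rewrite natf_eq0.
move: (factf_neq0 (m + n)); rewrite /beta addSn addnS !factS !natrM.
rewrite (_ : (m + n).+2%:R = m.+1%:R + n.+1%:R :> R); last by rewrite -natrD addSn addnS.
move: (m`!%:R) (n`!%:R) (m.+1%:R) (n.+1%:R) ((m + n).+1%:R) ((m + n)`!%:R).
by move=> a b x y s c c0 s0 xy0; field; rewrite c0 s0 xy0.
Qed.

Lemma beta_binom m n : beta m n = (((m + n).+1)%:R * 'C(m + n, m)%:R)^-1.
Proof.
have := bin_fact (leq_addr n m); rewrite addKn => fact_mn.
have : 'C(m + n, m)%:R != 0 :> R by rewrite natf_eq0 -lt0n bin_gt0 leq_addr.
have : (m + n).+1%:R != 0 :> R by rewrite natf_eq0.
move: (factf_neq0 n) (factf_neq0 m); rewrite /beta factS -fact_mn !natrM.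
move: (m`!%:R) (n`!%:R) ((m + n).+1%:R) ('C(m + n, m)%:R) => a b s c a0 b0 s0 c0.
by field; rewrite a0 b0 s0 c0.
Qed.

Lemma sum_alternating_coef L m M : (L.+1 + m <= M)%N ->
  \sum_(1 <= k < M.+1) (-1) ^+ k.+1 / k%:R * (ladder_power_coef k (L.+1 + m) L.+1)%:R
  = (-1) ^+ L * beta L m.
Proof.
elim: m L => [|m IH] L le_M.
  under eq_bigr => k _ do rewrite addn0 ladder_power_coef_diag mulrC.
  rewrite addn0 in le_M.
  rewrite sum_count_mem count_uniq_mem ?iota_uniq // mem_index_iota /= ltnS le_M mul1r.
  rewrite /beta addn0 factS fact0 muln1 natrM !exprS !mulN1r opprK.
  by rewrite invfM [L`!%:R * _]mulrCA divff ?factf_neq0 ?mulr1.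
under eq_bigr => k _ do
  rewrite addnS ladder_power_coef_pascal ?leq_addr // -addSn natrD mulrDr.
rewrite big_split /= !IH; try lia.
by rewrite [beta L m]betaE mulrDr exprS mulN1r mulNr addrA addNr add0r.
Qed.

End AlternatingSum.

Theorem theorem4p3 (R : fieldType) (charR : [pchar R] =i pred0) :
  log_star (Xlad R) (rhs R).
Proof.
split=> [|u]; first by rewrite /Xlad eqxx.
exists (edges u) => M le_uM; rewrite /log_partial.
under eq_bigr => k _ do rewrite (spow_ladders R k u) /ladder_power_count.
have [->|u_nb] := eqVneq u bullet.
  rewrite big_nat big1 // => k /andP [k_gt0 _].
  by rewrite /= ladder_power_coef_diag gtn_eqF // mulr0n mulr0.
have le_lu := leaves0_le_edges u; rewrite leaves0E // in le_lu *.
have [L lu] : exists L, leaves u = L.+1 by exists (leaves u).-1; rewrite prednK ?leaves_gt0.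
have [m eu] : exists m, edges u = (L.+1 + m)%N by exists (edges u - leaves u)%N; lia.
rewrite eu in le_uM; rewrite lu eu (sum_alternating_coef charR le_uM).
by rewrite (beta_binom charR) /rhs /= eu lu addSn /= invfM mulrCA.
Qed.
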